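(* For odd $m$, $s_1^{(m)\dagger}\Omega_m s_2^{(m)}=1$, where $\Omega_m=\begin{pmatrix}0&\mathbb{1}\\\mathbb{1}&0\end{pmatrix}$ is the $2m\times 2m$ symplectic form and $\mathbb{1}$ is the $m\times m$ identity matrix.
   Context: The Chamon model (one qubit per cubic lattice site) in the Laurent polynomial formalism over $\mathbb{F}_2[x^{\pm1},y^{\pm1},z^{\pm1}]$ has stabilizer map $\sigma=\begin{pmatrix}(1+x^{-1})(y^{-1}+z^{-1})\\(1+y^{-1})(x^{-1}+z^{-1})\end{pmatrix}$ and excitation map $\epsilon=\sigma^\dagger\Omega_1=\begin{pmatrix}(1+y)(x+z)&(1+x)(y+z)\end{pmatrix}$, where $^\dagger$ is transposition with spatial inversion. Define the fracton creation operators $s_1=x^{m-1}(1+y+\dots+y^{m-1})(1+z/x+\dots+(z/x)^{m-1})(1,0)^T$ and $s_2=y^{m-1}(1+x+\dots+x^{m-1})(1+z/y+\dots+(z/y)^{m-1})(0,1)^T$, which satisfy $\epsilon s_1=(1+y^m)(x^m+z^m)$ and $\epsilon s_2=(1+x^m)(y^m+z^m)$. $s_i^{(m)}$ denotes the representation of $s_i$ after coarse-graining the lattice by a factor $m$ in each direction (translation variables $x'=x^m$, $y'=y^m$, $z'=z^m$). *)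

(* Laurent polynomials over F_2 in x,y,z are modelled
   concretely as finite lists of exponent triples (monomials); the
   coefficient of a monomial is the parity of its multiplicity. *)
From mathcomp Require Import all_boot all_algebra.
Set Implicit Arguments. Unset Strict Implicit. Unset Printing Implicit Defensive.
Import GRing.Theory Num.Theory.
Local Open Scope ring_scope.

Definition mono := (int * int * int)%type.
Definition mk (a b c : int) : mono := (a, b, c).
Definition madd (e f : mono) : mono := mk (e.1.1 + f.1.1) (e.1.2 + f.1.2) (e.2 + f.2).
Definition mneg (e : mono) : mono := mk (- e.1.1) (- e.1.2) (- e.2).
Definition mscale (k : nat) (e : mono) : mono :=
  mk (k%:Z * e.1.1) (k%:Z * e.1.2) (k%:Z * e.2).

Definition lpoly := seq mono.
Definition lcoef (p : lpoly) (e : mono) : bool := odd (count_mem e p).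
Definition lpeq (p q : lpoly) : Prop := forall e, lcoef p e = lcoef q e.
Definition lzero : lpoly := [::].
Definition lone : lpoly := [:: mk 0 0 0].
Definition lmono (a b c : int) : lpoly := [:: mk a b c].
Definition ladd (p q : lpoly) : lpoly := p ++ q.
Definition lmul (p q : lpoly) : lpoly := [seq madd e f | e <- p, f <- q].
Definition lbar (p : lpoly) : lpoly := map mneg p.
Definition geom (n : nat) (t : mono) : lpoly := [seq mscale k t | k <- iota 0 n].

(* Pauli operators with one qubit per site: (X part, Z part) *)
Definition pauli1 := (lpoly * lpoly)%type.

Definition s1 (m : nat) : pauli1 :=
  (lmul (lmono (m.-1)%:Z 0 0) (lmul (geom m (mk 0 1 0)) (geom m (mk (-1) 0 1))),
   lzero).
Definition s2 (m : nat) : pauli1 :=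
  (lzero,
   lmul (lmono 0 (m.-1)%:Z 0) (lmul (geom m (mk 1 0 0)) (geom m (mk 0 (-1) 1)))).

(* Coarse-graining by factor m: fine site (m i + u1, m j + u2, m k + u3),
   0 <= u_l < m, becomes qubit u = (u1,u2,u3) of coarse site (i,j,k);
   x' = x^m, y' = y^m, z' = z^m. *)
Definition block := (nat * nat * nat)%type.
Definition blocks (m : nat) : seq block :=
  flatten [seq [seq (a, b, c) | b <- iota 0 m, c <- iota 0 m] | a <- iota 0 m].
Definition in_block (m : nat) (u : block) (e : mono) : bool :=
  [&& modz e.1.1 m%:Z == u.1.1%:Z, modz e.1.2 m%:Z == u.1.2%:Z
    & modz e.2 m%:Z == u.2%:Z].
Definition coarse_mono (m : nat) (e : mono) : mono :=
  mk (divz e.1.1 m%:Z) (divz e.1.2 m%:Z) (divz e.2 m%:Z).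
Definition cg_comp (m : nat) (p : lpoly) (u : block) : lpoly :=
  [seq coarse_mono m e | e <- p & in_block m u e].

(* coarse-grained Pauli s^(m): a vector of length 2 m^3 over
   F_2[x'^{+-1},...], indexed by (X/Z, u); first m^3 X components, then Z *)
Definition cpauli := ((block -> lpoly) * (block -> lpoly))%type.
Definition coarse (m : nat) (s : pauli1) : cpauli :=
  (cg_comp m s.1, cg_comp m s.2).

(* s^dagger Omega t, with Omega = [[0, 1],[1, 0]] the 2n x 2n symplectic
   form, n = m^3 qubits per coarse site *)
Definition symp (m : nat) (s t : cpauli) : lpoly :=
  flatten [seq ladd (lmul (lbar (s.1 u)) (t.2 u)) (lmul (lbar (s.2 u)) (t.1 u))
          | u <- blocks m].

(* Both fracton operators live inside the coarse block at the origin, so after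
   coarse-graining each is a vector of constants: the entry at qubit u is 1
   exactly when u is a site of its support.  The symplectic product is thus the
   parity of the number of common sites; s1 is supported on the sites
   (m-1-k, b, k) and s2 on the sites (a, m-1-k, k), so the common ones are the
   m diagonal sites (m-1-k, m-1-k, k). *)
From mathcomp Require Import all_boot all_algebra.
From mathcomp Require Import zify.
Set Implicit Arguments. Unset Strict Implicit. Unset Printing Implicit Defensive.
Import GRing.Theory.

Definition lconst (n : nat) : lpoly := nseq n (mk 0 0 0).

Lemma lmul_lbar_lconst a b : lmul (lbar (lconst a)) (lconst b) = lconst (a * b).
Proof.
elim: a => //= a IH; rewrite mulSn /lconst nseqD -[nseq (a * b) _]IH /lmul /=.
congr (_ ++ _).
by elim: b {IH} => //= b ->; rewrite /madd /mneg /= oppr0 add0r.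
Qed.

Lemma flatten_lconst (T : Type) (f : T -> nat) (s : seq T) :
  flatten [seq lconst (f u) | u <- s] = lconst (sumn [seq f u | u <- s]).
Proof. by elim: s => //= u s ->; rewrite /lconst nseqD. Qed.

Lemma lconst_odd n : odd n -> lpeq (lconst n) lone.
Proof.
move=> odd_n e; rewrite /lcoef count_nseq /=.
by case: (_ == e); rewrite /= ?mul1n ?odd_n.
Qed.

Definition mono_of_site (t : block) : mono := mk t.1.1%:Z t.1.2%:Z t.2%:Z.

Lemma mem_blocks m a b c : ((a, b, c) \in blocks m) = [&& a < m, b < m & c < m].
Proof.
apply/flatten_mapP/and3P => [[a' ha /allpairsP[[b' c'] [/= hb hc [-> -> ->]]]]|].
  by move: ha hb hc; rewrite !mem_iota.
case=> ha hb hc; exists a; rewrite ?mem_iota //.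
by apply/allpairsP; exists (b, c); rewrite /= !mem_iota.
Qed.

Lemma uniq_blocks m : uniq (blocks m).
Proof.
have -> : blocks m = [seq (a, q.1, q.2) | a <- iota 0 m,
                        q <- [seq (b, c) | b <- iota 0 m, c <- iota 0 m]].
  by congr flatten; apply: eq_map => a; rewrite map_allpairs.
apply: allpairs_uniq; rewrite ?iota_uniq //.
  by apply: allpairs_uniq; rewrite ?iota_uniq // => -[? ?] [? ?] _ _ [-> ->].
by move=> [? [? ?]] [? [? ?]] _ _ [-> -> ->].
Qed.

Lemma in_block_site m u t : t \in blocks m -> in_block m u (mono_of_site t) = (t == u).
Proof.
case: t u => [[a b] c] [[a' b'] c']; rewrite mem_blocks => /and3P[ha hb hc].
by rewrite /in_block /= !modz_nat !modn_small // !eqz_nat !xpair_eqE andbA.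
Qed.

Lemma coarse_mono_site m t : t \in blocks m -> coarse_mono m (mono_of_site t) = mk 0 0 0.
Proof.
case: t => [[a b] c]; rewrite mem_blocks => /and3P[ha hb hc].
by rewrite /coarse_mono /= !divz_nat !divn_small.
Qed.

Lemma cg_comp_sites m (L : seq block) u : {subset L <= blocks m} ->
  cg_comp m (map mono_of_site L) u = lconst (count_mem u L).
Proof.
elim: L => //= t L IH sub_tL.
have t_block : t \in blocks m by apply: sub_tL; rewrite mem_head.
have sub_L : {subset L <= blocks m} by move=> v Lv; apply: sub_tL; rewrite inE Lv orbT.
move: (IH sub_L); rewrite /cg_comp /= in_block_site // eq_sym.
by case: (u == t) => /= ->; rewrite ?coarse_mono_site.
Qed.

Lemma sumn_count_mem_mul (T : eqType) (B s t : seq T) :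
  uniq B -> uniq s -> uniq t -> {subset s <= B} ->
  sumn [seq count_mem u s * count_mem u t | u <- B] = count (mem t) s.
Proof.
move=> uB us ut sB.
rewrite (eq_map (g := fun u => nat_of_bool ((u \in t) && (u \in s)))); last first.
  by move=> u; rewrite !count_uniq_mem // mulnb andbC.
rewrite sumn_count -count_filter; apply/permP/uniq_perm; rewrite ?filter_uniq //.
by move=> u; rewrite mem_filter andb_idr //; apply: sB.
Qed.

Definition s1_sites m : seq block :=
  [seq (m.-1 - k, b, k) | b <- iota 0 m, k <- iota 0 m].
Definition s2_sites m : seq block :=
  [seq (a, m.-1 - k, k) | a <- iota 0 m, k <- iota 0 m].

Lemma s1_support m : (s1 m).1 = map mono_of_site (s1_sites m).
Proof.
rewrite /s1 /lmul /lmono /= cats0 map_allpairs /geom allpairs_mapl allpairs_mapr.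
rewrite map_allpairs; apply/eq_in_allpairs => b k _; rewrite mem_iota add0n => hk.
by rewrite /madd /mscale /mono_of_site /=; congr (_, _, _); lia.
Qed.

Lemma s2_support m : (s2 m).2 = map mono_of_site (s2_sites m).
Proof.
rewrite /s2 /lmul /lmono /= cats0 map_allpairs /geom allpairs_mapl allpairs_mapr.
rewrite map_allpairs; apply/eq_in_allpairs => a k _; rewrite mem_iota add0n => hk.
by rewrite /madd /mscale /mono_of_site /=; congr (_, _, _); lia.
Qed.

Lemma mem_s1_sites m a b c :
  ((a, b, c) \in s1_sites m) = [&& b < m, c < m & a == m.-1 - c].
Proof.
apply/allpairsP/and3P => [[[b' k] [/= hb hk [-> -> ->]]]|[hb hc /eqP ->]].
  by move: hb hk; rewrite !mem_iota.
by exists (b, c); rewrite /= !mem_iota.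
Qed.

Lemma mem_s2_sites m a b c :
  ((a, b, c) \in s2_sites m) = [&& a < m, c < m & b == m.-1 - c].
Proof.
apply/allpairsP/and3P => [[[a' k] [/= ha hk [-> -> ->]]]|[ha hc /eqP ->]].
  by move: ha hk; rewrite !mem_iota.
by exists (a, c); rewrite /= !mem_iota.
Qed.

Lemma uniq_s1_sites m : uniq (s1_sites m).
Proof. by rewrite allpairs_uniq ?iota_uniq // => -[? ?] [? ?] _ _ [_ -> ->]. Qed.

Lemma uniq_s2_sites m : uniq (s2_sites m).
Proof. by rewrite allpairs_uniq ?iota_uniq // => -[? ?] [? ?] _ _ [-> _ ->]. Qed.

Lemma s1_sites_sub m : {subset s1_sites m <= blocks m}.
Proof.
move=> [[a b] c]; rewrite mem_s1_sites mem_blocks => /and3P[hb hc /eqP ->].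
by rewrite hb hc andbT; lia.
Qed.

Lemma s2_sites_sub m : {subset s2_sites m <= blocks m}.
Proof.
move=> [[a b] c]; rewrite mem_s2_sites mem_blocks => /and3P[ha hc /eqP ->].
by rewrite ha hc /=; lia.
Qed.

Lemma count_s1_sites_in_s2 m : count (mem (s2_sites m)) (s1_sites m) = m.
Proof.
rewrite count_flatten -map_comp -[RHS](size_iota 0 m) -count_predT -sumn_count.
congr sumn; apply/eq_in_map => b; rewrite mem_iota add0n => hb /=.
rewrite count_map (eq_in_count (a2 := pred1 (m.-1 - b))) => [|k]; last first.
  by rewrite mem_iota => hk /=; rewrite mem_s2_sites; apply/idP/eqP; lia.
by rewrite (count_uniq_mem _ (iota_uniq 0 m)) mem_iota; apply/eqP; lia.
Qed.

Theorem lemma1 (m : nat) (hm : odd m) :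
  lpeq (symp m (coarse m (s1 m)) (coarse m (s2 m))) lone.
Proof.
have -> : symp m (coarse m (s1 m)) (coarse m (s2 m)) =
    lconst (sumn [seq count_mem u (s1_sites m) * count_mem u (s2_sites m) | u <- blocks m]).
  rewrite -flatten_lconst /symp /coarse s1_support s2_support /=.
  congr flatten; apply: eq_map => u.
  by rewrite (cg_comp_sites _ (@s1_sites_sub m)) (cg_comp_sites _ (@s2_sites_sub m))
             lmul_lbar_lconst /ladd cats0.
rewrite sumn_count_mem_mul ?uniq_blocks ?uniq_s1_sites ?uniq_s2_sites //.
  by rewrite count_s1_sites_in_s2; apply: lconst_odd.
exact: s1_sites_sub.
Qed.
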